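(* Let $n\ge2$ and $\epsilon>0$. For every $\epsilon$-optimal vector strategy $\{u_r\},\{v_j\}$ for the game $\mathrm{CHSH}(n)$, the vectors $v_1,\dots,v_n$ span a real subspace of dimension at least $n-8\sqrt2\,n(n-1)\epsilon$; in particular the strategy lives in a space of at least that dimension.
   Context: $\mathrm{CHSH}(n)$ is the $n(n-1)\times n$ XOR game whose columns are indexed by $\{1,\dots,n\}$ and which has, for each pair $1\le i<j\le n$, the two rows $(e_i-e_j)/(2n(n-1))$ and $(e_i+e_j)/(2n(n-1))$ ($e_i$ the standard basis row vectors). Its quantum success bias is $1/\sqrt2$. A vector strategy for an $m\times n$ game with cost matrix $G$ is a pair of families of unit vectors $u_1,\dots,u_m$, $v_1,\dots,v_n$ in some $\mathbb{R}^N$, with bias $\sum G_{rj}u_r\cdot v_j$; it is $\epsilon$-optimal if its bias is at least $\varepsilon_q(G)-\epsilon$, where $\varepsilon_q(G)$ is the maximum bias over vector strategies. *)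

From HB Require Import structures.
From mathcomp Require Import all_boot all_order all_algebra.
Set Implicit Arguments. Unset Strict Implicit. Unset Printing Implicit Defensive.
Import Order.TTheory GRing.Theory Num.Theory.
Local Open Scope ring_scope.

Definition dotv (R : rcfType) (N : nat) (x y : 'rV[R]_N) : R :=
  \sum_(k < N) x 0 k * y 0 k.

(* An XOR game with row index finite type rT and n columns: cost matrix
   G : rT -> 'I_n -> R (G r j = G_{rj}). *)

Definition vector_strategy (R : rcfType) (rT : finType) (n N : nat)
  (u : rT -> 'rV[R]_N) (v : 'I_n -> 'rV[R]_N) : Prop :=
  (forall r, dotv (u r) (u r) = 1) /\ (forall j, dotv (v j) (v j) = 1).

Definition bias (R : rcfType) (rT : finType) (n N : nat)
  (G : rT -> 'I_n -> R) (u : rT -> 'rV[R]_N) (v : 'I_n -> 'rV[R]_N) : R :=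
  \sum_(r : rT) \sum_(j < n) G r j * dotv (u r) (v j).

Definition achievable_bias (R : rcfType) (rT : finType) (n : nat)
  (G : rT -> 'I_n -> R) (b : R) : Prop :=
  exists N (u : rT -> 'rV[R]_N) (v : 'I_n -> 'rV[R]_N),
    vector_strategy u v /\ b = bias G u v.

(* q = eps_q(G): the supremum (least upper bound) of the biases of all
   vector strategies (the paper: the maximum, which in particular is the lub). *)
Definition is_quantum_bias (R : rcfType) (rT : finType) (n : nat)
  (G : rT -> 'I_n -> R) (q : R) : Prop :=
  (forall b, achievable_bias G b -> b <= q) /\
  (forall q', (forall b, achievable_bias G b -> b <= q') -> q <= q').

Definition eps_optimal (R : rcfType) (rT : finType) (n N : nat)
  (G : rT -> 'I_n -> R) (q eps : R)
  (u : rT -> 'rV[R]_N) (v : 'I_n -> 'rV[R]_N) : Prop :=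
  vector_strategy u v /\ q - eps <= bias G u v.

(* Rows of CHSH(n): triples (i, j, s) with i < j; s = false is the row
   (e_i - e_j)/(2n(n-1)), s = true is the row (e_i + e_j)/(2n(n-1)).
   There are exactly n(n-1) of them. *)
Definition chsh_pred (n : nat) : pred ('I_n * 'I_n * bool) :=
  fun p => (p.1.1 < p.1.2)%N.
Definition chsh_row (n : nat) : finType := {p : 'I_n * 'I_n * bool | @chsh_pred n p}.

Definition CHSH (R : rcfType) (n : nat) : chsh_row n -> 'I_n -> R :=
  fun p k =>
    let i := (val p).1.1 in let j := (val p).1.2 in let s := (val p).2 in
    ((k == i)%:R + (if s then 1 else -1) * (k == j)%:R)
      / (2 * n * (n - 1))%:R.

Definition rows_mx (R : rcfType) (n N : nat) (v : 'I_n -> 'rV[R]_N) : 'M[R]_(n, N) :=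
  \matrix_(j < n) v j.

Arguments chsh_pred n p : clear implicits.
Arguments CHSH R n p k : clear implicits.

(* Write c_ij = v_i . v_j.  A CHSH row pairs u_r with v_i +- v_j, so by Cauchy-Schwarz its
   contribution is at most |v_i +- v_j| = sqrt (2 +- 2 c_ij), while the strategy
   u_r = (e_i +- e_j) / sqrt 2, v_j = e_j attains sqrt 2 on every row.  Hence for an
   eps-optimal strategy the total defect
   sum_{i<j} (2 sqrt 2 - sqrt (2 + 2 c_ij) - sqrt (2 - 2 c_ij)) is at most 2 n (n - 1) eps,
   and the scalar bound sqrt 2 c^2 <= 4 (2 sqrt 2 - sqrt (2 + 2 c) - sqrt (2 - 2 c)) gives
   2 sum_{i<j} c_ij^2 <= 8 sqrt 2 n (n - 1) eps.  Finally the Gram matrix G = V V^T obeys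
   (tr G)^2 <= rank V * tr (G^2) (Cauchy-Schwarz against the orthogonal projection onto the
   row space of V), i.e. n^2 <= rank V * (n + 2 sum_{i<j} c_ij^2), so
   rank V >= n - 2 sum_{i<j} c_ij^2. *)

From HB Require Import structures.
From mathcomp Require Import all_boot all_order all_algebra.
From mathcomp Require Import ring lra.
Import Order.TTheory GRing.Theory Num.Theory.
Local Open Scope ring_scope.
Set Implicit Arguments. Unset Strict Implicit. Unset Printing Implicit Defensive.

Lemma sum_symmetricE (V : nmodType) n (F : 'I_n -> 'I_n -> V) :
  (forall i j, F i j = F j i) ->
  \sum_i \sum_j F i j = \sum_i F i i + (\sum_(i < n) \sum_(j < n | (i < j)%N) F i j) *+ 2.
Proof.
move=> Fsym.
have split_row i : \sum_j F i j =
    F i i + (\sum_(j < n | (i < j)%N) F i j + \sum_(j < n | (j < i)%N) F i j).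
  rewrite (bigD1 i) //= (bigID (fun j : 'I_n => (i < j)%N)) /=; congr (_ + (_ + _)).
    by apply: eq_bigl => j; rewrite andb_idl // => ij; rewrite neq_ltn ij orbT.
  by apply: eq_bigl => j; rewrite -leqNgt ltn_neqAle.
have lower : \sum_(i < n) \sum_(j < n | (j < i)%N) F i j =
               \sum_(i < n) \sum_(j < n | (i < j)%N) F i j.
  rewrite (exchange_big_dep xpredT) //=; apply: eq_bigr => i _.
  by apply: eq_bigr => j _; rewrite Fsym.
by rewrite (eq_bigr _ (fun i _ => split_row i)) !big_split /= lower mulr2n.
Qed.

Lemma sum_delta_mull (R : pzSemiRingType) n (i : 'I_n) (F : 'I_n -> R) :
  \sum_k (k == i)%:R * F k = F i.
Proof. by rewrite (bigD1 i) //= eqxx mul1r big1 ?addr0 // => k /negbTE ->; rewrite mul0r. Qed.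

Section CauchySchwarz.
Variable R : realDomainType.

Lemma sum_mul_sqr_le (I : finType) (f g : I -> R) :
  (\sum_i f i * g i) ^+ 2 <= (\sum_i f i * f i) * (\sum_i g i * g i).
Proof.
set A := \sum_i f i * f i; set B := \sum_i g i * g i; set C := \sum_i f i * g i.
have lagrange : \sum_i \sum_j (f i * g j - f j * g i) ^+ 2 = (A * B - C ^+ 2) *+ 2.
  have -> : (A * B - C ^+ 2) *+ 2 = A * B + B * A - (C * C) *+ 2 by ring.
  rewrite !big_distrlr -big_split -sumrMnl -sumrB; apply: eq_bigr => i _.
  rewrite -big_split -sumrMnl -sumrB; apply: eq_bigr => j _ /=; ring.
rewrite -subr_ge0 -(pmulrn_lge0 _ (isT : (0 < 2)%N)) -lagrange.
by apply: sumr_ge0 => i _; apply: sumr_ge0 => j _; exact: sqr_ge0.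
Qed.

Lemma mxtrace_mul_trE m p (X Y : 'M[R]_(m, p)) :
  \tr (X *m Y^T) = \sum_i \sum_j X i j * Y i j.
Proof. by apply: eq_bigr => i _; rewrite mxE; apply: eq_bigr => j _; rewrite mxE. Qed.

Lemma mxtrace_mul_tr_sqr_le m p (X Y : 'M[R]_(m, p)) :
  \tr (X *m Y^T) ^+ 2 <= \tr (X *m X^T) * \tr (Y *m Y^T).
Proof.
rewrite !mxtrace_mul_trE !pair_bigA /=.
exact: (sum_mul_sqr_le (fun ij => X ij.1 ij.2) (fun ij => Y ij.1 ij.2)).
Qed.
End CauchySchwarz.

Section InnerProduct.
Variables (R : rcfType) (N : nat).
Implicit Types x y z : 'rV[R]_N.

Lemma dotvC x y : dotv x y = dotv y x.
Proof. by apply: eq_bigr => k _; rewrite mulrC. Qed.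

Lemma dotvDr x y z : dotv x (y + z) = dotv x y + dotv x z.
Proof. by rewrite /dotv -big_split; apply: eq_bigr => k _; rewrite mxE mulrDr. Qed.

Lemma dotvZr x a y : dotv x (a *: y) = a * dotv x y.
Proof. by rewrite /dotv mulr_sumr; apply: eq_bigr => k _; rewrite mxE mulrCA. Qed.

Lemma dotvDl x y z : dotv (y + z) x = dotv y x + dotv z x.
Proof. by rewrite dotvC dotvDr !(dotvC x). Qed.

Lemma dotvZl x a y : dotv (a *: y) x = a * dotv y x.
Proof. by rewrite dotvC dotvZr dotvC. Qed.

Lemma dotvDZ x a y :
  dotv (x + a *: y) (x + a *: y) = dotv x x + (a * dotv x y) *+ 2 + a ^+ 2 * dotv y y.
Proof. by rewrite dotvDl !dotvDr !dotvZl !dotvZr (dotvC y x); ring. Qed.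

Lemma dotv_sqr_le x y : dotv x y ^+ 2 <= dotv x x * dotv y y.
Proof. exact: sum_mul_sqr_le. Qed.

Lemma dotv_le_sqrt x y : dotv x x = 1 -> dotv x y <= Num.sqrt (dotv y y).
Proof.
move=> x1; apply: le_trans (ler_norm _) _.
by rewrite -sqrtr_sqr ler_wsqrtr // -[dotv y y]mul1r -x1 dotv_sqr_le.
Qed.

Lemma normr_dotv_le1 x y : dotv x x = 1 -> dotv y y = 1 -> `|dotv x y| <= 1.
Proof.
move=> x1 y1; rewrite -sqrtr_sqr -sqrtr1 ler_wsqrtr //.
by rewrite -[1]mulr1 -{1}x1 -y1 dotv_sqr_le.
Qed.

Lemma dotv_mxE x y : dotv x y = (x *m y^T) 0 0.
Proof. by rewrite mxE; apply: eq_bigr => k _; rewrite mxE. Qed.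

Lemma dotv_eq0 x : (dotv x x == 0) = (x == 0).
Proof.
apply/idP/eqP => [x0|->]; last by rewrite /dotv big1 // => k _; rewrite mxE mul0r.
apply/rowP => k; rewrite mxE.
have /eqP : x 0 k * x 0 k = 0.
  by apply: (psumr_eq0P _ (eqP x0)) => // j _; rewrite -expr2 sqr_ge0.
by rewrite mulf_eq0 orbb => /eqP.
Qed.

Lemma dotv_delta (i j : 'I_N) : dotv (delta_mx 0 i) (delta_mx 0 j) = (i == j)%:R :> R.
Proof.
rewrite -(sum_delta_mull i (fun k => (k == j)%:R)) /dotv.
by apply: eq_bigr => k _; rewrite !mxE eqxx.
Qed.

End InnerProduct.

Section Gram.
Variable R : rcfType.

Lemma row_free_gram_unit r N (B : 'M[R]_(r, N)) : row_free B -> B *m B^T \in unitmx.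
Proof.
move=> freeB; rewrite -row_free_unit; apply: inj_row_free => y yBBt.
apply: (row_free_inj freeB); apply/eqP; rewrite /= mul0mx -dotv_eq0 dotv_mxE.
by rewrite trmx_mul mulmxA -(mulmxA y) yBBt mul0mx mxE.
Qed.

Definition orth_proj r N (B : 'M[R]_(r, N)) : 'M[R]_N := B^T *m invmx (B *m B^T) *m B.

Section OrthProj.
Variables (r N : nat) (B : 'M[R]_(r, N)).
Hypothesis freeB : row_free B.

Let gramK : B *m B^T *m invmx (B *m B^T) = 1%:M.
Proof. by rewrite mulmxV // row_free_gram_unit. Qed.

Lemma orth_proj_id m (V : 'M[R]_(m, N)) : (V <= B)%MS -> V *m orth_proj B = V.
Proof.
by case/submxP=> X ->; rewrite /orth_proj -!mulmxA (mulmxA B) (mulmxA _ (invmx _)) gramK mul1mx.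
Qed.

Lemma mxtrace_orth_proj : \tr ((orth_proj B)^T *m orth_proj B) = r%:R.
Proof.
rewrite /orth_proj !trmx_mul trmxK trmx_inv trmx_mul trmxK mxtrace_mulC -!mulmxA mxtrace_mulC.
by rewrite -!mulmxA mxtrace_mulC !mulmxA gramK mul1mx gramK mxtrace1.
Qed.
End OrthProj.

Lemma mxtrace_gram_sqr_le_rank m N (V : 'M[R]_(m, N)) :
  \tr (V *m V^T) ^+ 2 <= (\rank V)%:R * \tr (V *m V^T *m (V *m V^T)).
Proof.
set P := orth_proj (row_base V).
have VP : V *m P = V by rewrite orth_proj_id ?row_base_free ?eq_row_base.
have -> : \tr (V *m V^T) = \tr (V^T *m V *m P^T^T).
  by rewrite trmxK -mulmxA mxtrace_mulC VP.
apply: le_trans (mxtrace_mul_tr_sqr_le _ _) _.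
rewrite trmxK /P mxtrace_orth_proj ?row_base_free // mulrC trmx_mul trmxK.
by rewrite -!mulmxA mxtrace_mulC !mulmxA.
Qed.
End Gram.

Section RowsGram.
Variables (R : rcfType) (n N : nat) (v : 'I_n -> 'rV[R]_N).

Lemma rows_mx_gramE i j : (rows_mx v *m (rows_mx v)^T) i j = dotv (v i) (v j).
Proof. by rewrite mxE; apply: eq_bigr => k _; rewrite !mxE. Qed.

Lemma rank_rows_mx_ge :
  (\sum_i dotv (v i) (v i)) ^+ 2 <=
  (\rank (rows_mx v))%:R * \sum_i \sum_j dotv (v i) (v j) ^+ 2.
Proof.
set G := rows_mx v *m (rows_mx v)^T.
have trG : \tr G = \sum_i dotv (v i) (v i) by apply: eq_bigr => i _; rewrite /G rows_mx_gramE.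
have Gt : G^T = G by rewrite /G trmx_mul trmxK.
have trGG : \tr (G *m G) = \sum_i \sum_j dotv (v i) (v j) ^+ 2.
  rewrite -{2}Gt mxtrace_mul_trE; apply: eq_bigr => i _; apply: eq_bigr => j _.
  by rewrite /G rows_mx_gramE expr2.
by have := mxtrace_gram_sqr_le_rank (rows_mx v); rewrite -/G trG trGG.
Qed.

Lemma rank_rows_mx_unit_ge : (forall i, dotv (v i) (v i) = 1) ->
  n%:R - (\sum_(i < n) \sum_(j < n | (i < j)%N) dotv (v i) (v j) ^+ 2) *+ 2
    <= (\rank (rows_mx v))%:R.
Proof.
move=> unit_v; have := rank_rows_mx_ge.
rewrite (sum_symmetricE (F := fun i j => dotv (v i) (v j) ^+ 2)); last by move=> i j; rewrite dotvC.
have -> : \sum_i dotv (v i) (v i) = n%:R.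
  by rewrite (eq_bigr _ (fun i _ => unit_v i)) sumr_const card_ord.
have -> : \sum_i dotv (v i) (v i) ^+ 2 = n%:R.
  by under eq_bigr do rewrite unit_v expr1n; rewrite sumr_const card_ord.
set S := \sum_(i < n) _.
have S0 : 0 <= S by apply: sumr_ge0 => i _; apply: sumr_ge0 => j _; exact: sqr_ge0.
have r0 : 0 <= (\rank (rows_mx v))%:R :> R := ler0n _ _.
have := ler0n R n; nra.
Qed.
End RowsGram.

Section CHSHDefect.
Variable R : rcfType.

Definition chsh_defect (c : R) : R :=
  (Num.sqrt 2 - Num.sqrt (2 + 2 * c)) + (Num.sqrt 2 - Num.sqrt (2 - 2 * c)).

Lemma chsh_defect_ge c : `|c| <= 1 -> Num.sqrt 2 * c ^+ 2 <= 4 * chsh_defect c.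
Proof.
rewrite ler_norml => /andP[c_ge c_le].
set t := Num.sqrt 2; set a := Num.sqrt (2 - 2 * c); set b := Num.sqrt (2 + 2 * c).
have sqr_sqrt x : 0 <= x -> Num.sqrt x * Num.sqrt x = x by move=> x0; rewrite -expr2 sqr_sqrtr.
have tt : t * t = 2 by rewrite sqr_sqrt.
have aa : a * a = 2 - 2 * c by rewrite sqr_sqrt //; lra.
have bb : b * b = 2 + 2 * c by rewrite sqr_sqrt //; lra.
have [t0 a0 b0] : [/\ 0 <= t, 0 <= a & 0 <= b] by rewrite !sqrtr_ge0.
(* With s = a + b: 16 c^2 = (b^2 - a^2)^2 = (2t - s) (2t + s) s^2 and 0 <= s <= 2t. *)
rewrite /chsh_defect -/t -/a -/b; set s := a + b.
have s0 : 0 <= s by rewrite addr_ge0.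
have ab2 : (a - b) * (a - b) = (2 * t - s) * (2 * t + s).
  have -> : (2 * t - s) * (2 * t + s) = 4 * (t * t) - s * s by ring.
  rewrite /s tt; nra.
have s_le : s <= 2 * t.
  have : 0 <= (2 * t - s) * (2 * t + s) by rewrite -ab2 -expr2 sqr_ge0.
  nra.
have c16 : 16 * (c * c) = (2 * t - s) * (2 * t + s) * (s * s).
  rewrite -ab2; have -> : 16 * (c * c) = (b * b - a * a) * (b * b - a * a) by rewrite aa bb; ring.
  rewrite /s; ring.
have h1 : t * (2 * t + s) <= 8 by nra.
have h2 : s * s <= 8 by nra.
have h : t * (2 * t + s) * (s * s) <= 64.
  by apply: le_trans (ler_pM _ _ h1 h2) _; rewrite ?mulr_ge0 ?addr_ge0 //; lra.
have : 0 <= (2 * t - s) * (64 - t * (2 * t + s) * (s * s)) by rewrite mulr_ge0 // subr_ge0.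
rewrite /s in c16 *; nra.
Qed.
End CHSHDefect.

Section CHSH.
Variables (R : rcfType) (n : nat).
Local Notation D := ((2 * n * (n - 1))%:R : R).

Definition chsh_sign (s : bool) : R := if s then 1 else -1.

Definition chsh_combo N (v : 'I_n -> 'rV[R]_N) (p : chsh_row n) : 'rV[R]_N :=
  v (val p).1.1 + chsh_sign (val p).2 *: v (val p).1.2.

Lemma sum_chsh_row (V : nmodType) (F : 'I_n -> 'I_n -> bool -> V) :
  \sum_(p : chsh_row n) F (val p).1.1 (val p).1.2 (val p).2 =
  \sum_(i < n) \sum_(j < n | (i < j)%N) (F i j true + F i j false).
Proof.
have -> : \sum_(p : chsh_row n) F (val p).1.1 (val p).1.2 (val p).2 =
    \sum_(x | chsh_pred n x) F x.1.1 x.1.2 x.2.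
  symmetry; rewrite (reindex_omap (val : chsh_row n -> _) insub); last first.
    by move=> x hx; rewrite insubT.
  by apply: eq_bigl => y; rewrite valK eqxx andbT (valP y).
have -> : \sum_(x | chsh_pred n x) F x.1.1 x.1.2 x.2 =
    \sum_(ij : 'I_n * 'I_n | (ij.1 < ij.2)%N) \sum_(s : bool) F ij.1 ij.2 s.
  by rewrite pair_big /=; apply: eq_big => [[ij s]|[ij s] _] //=; rewrite andbT.
rewrite (pair_big_dep xpredT (fun i j : 'I_n => (i < j)%N)) /=.
by apply: eq_bigr => ij _; rewrite big_bool.
Qed.

Section Strategy.
Variables (N : nat) (v : 'I_n -> 'rV[R]_N).

Lemma CHSH_dotvE (p : chsh_row n) (x : 'rV[R]_N) :
  \sum_k CHSH R n p k * dotv x (v k) = dotv x (chsh_combo v p) / D.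
Proof.
under eq_bigr do rewrite /CHSH mulrAC mulrDl -mulrA.
by rewrite -mulr_suml big_split /= -mulr_sumr !sum_delta_mull /chsh_combo dotvDr dotvZr.
Qed.

Lemma bias_CHSHE (u : chsh_row n -> 'rV[R]_N) :
  bias (CHSH R n) u v = \sum_p dotv (u p) (chsh_combo v p) / D.
Proof. by apply: eq_bigr => p _; rewrite CHSH_dotvE. Qed.

Lemma dotv_chsh_combo (p : chsh_row n) :
  (forall j, dotv (v j) (v j) = 1) ->
  dotv (chsh_combo v p) (chsh_combo v p) =
  2 + 2 * (chsh_sign (val p).2 * dotv (v (val p).1.1) (v (val p).1.2)).
Proof.
move=> unit_v; rewrite /chsh_combo dotvDZ !unit_v.
have -> : chsh_sign (val p).2 ^+ 2 = 1 by rewrite /chsh_sign; case: (val p).2; ring.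
ring.
Qed.

Lemma bias_CHSH_le (u : chsh_row n -> 'rV[R]_N) : vector_strategy u v ->
  bias (CHSH R n) u v <=
  \sum_(p : chsh_row n)
    Num.sqrt (2 + 2 * (chsh_sign (val p).2 * dotv (v (val p).1.1) (v (val p).1.2))) / D.
Proof.
case=> unit_u unit_v; rewrite bias_CHSHE; apply: ler_sum => p _.
by rewrite ler_wpM2r ?invr_ge0 // -dotv_chsh_combo // dotv_le_sqrt.
Qed.
End Strategy.

Lemma CHSH_canonical_bias : achievable_bias (CHSH R n) (\sum_(p : chsh_row n) Num.sqrt 2 / D).
Proof.
pose v (k : 'I_n) : 'rV[R]_n := delta_mx 0 k.
have unit_v k : dotv (v k) (v k) = 1 by rewrite dotv_delta eqxx.
have combo2 p : dotv (chsh_combo v p) (chsh_combo v p) = 2.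
  have /negbTE ij_neq : (val p).1.1 != (val p).1.2 by rewrite neq_ltn (valP p : (_ < _)%N).
  by rewrite dotv_chsh_combo // dotv_delta ij_neq mulr0 mulr0 addr0.
have t2 : Num.sqrt 2 * Num.sqrt 2 = 2 :> R by rewrite -expr2 sqr_sqrtr.
have t_neq0 : Num.sqrt 2 != 0 :> R by rewrite sqrtr_eq0 -ltNge.
set t := Num.sqrt 2 in t2 t_neq0 *.
exists n, (fun p => t^-1 *: chsh_combo v p), v; split; first split.
- by move=> p; rewrite dotvZl dotvZr combo2 -t2 mulKf // mulVf.
- exact: unit_v.
rewrite bias_CHSHE; apply: eq_bigr => p _.
by rewrite dotvZl combo2 -t2 mulKf.
Qed.

Section Optimal.
Variables (N : nat) (u : chsh_row n -> 'rV[R]_N) (v : 'I_n -> 'rV[R]_N) (q eps : R).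
Hypotheses (n_ge2 : (2 <= n)%N) (q_bias : is_quantum_bias (CHSH R n) q)
  (opt : eps_optimal (CHSH R n) q eps u v).

Lemma sum_chsh_defect_le :
  \sum_(i < n) \sum_(j < n | (i < j)%N) chsh_defect (dotv (v i) (v j)) <= eps * D.
Proof.
have D_gt0 : 0 < D by rewrite ltr0n !muln_gt0 subn_gt0 (leq_trans _ n_ge2).
have [strat bias_ge] := opt.
have hi := le_trans bias_ge (bias_CHSH_le strat).
have lo := q_bias.1 _ CHSH_canonical_bias.
pose F i j s := Num.sqrt 2 - Num.sqrt (2 + 2 * (chsh_sign s * dotv (v i) (v j))).
have -> : \sum_(i < n) \sum_(j < n | (i < j)%N) chsh_defect (dotv (v i) (v j)) =
    \sum_(p : chsh_row n) F (val p).1.1 (val p).1.2 (val p).2.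
  rewrite sum_chsh_row; apply: eq_bigr => i _; apply: eq_bigr => j _.
  by rewrite /F /chsh_sign mul1r mulN1r mulrN.
rewrite -ler_pdivrMr // mulr_suml (eq_bigr _ (fun p _ => mulrBl _ _ _)) sumrB; lra.
Qed.

Lemma sum_sqr_dotv_le :
  (\sum_(i < n) \sum_(j < n | (i < j)%N) dotv (v i) (v j) ^+ 2) *+ 2
    <= 8 * Num.sqrt 2 * n%:R * (n - 1)%:R * eps.
Proof.
have [[_ unit_v] _] := opt.
set S := \sum_(i < n) _.
have tS : Num.sqrt 2 * S <= 4 * (eps * D).
  apply: le_trans (ler_wpM2l _ sum_chsh_defect_le) => //.
  rewrite !mulr_sumr; apply: ler_sum => i _; rewrite !mulr_sumr; apply: ler_sum => j _.
  exact/chsh_defect_ge/normr_dotv_le1.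
have t2 : Num.sqrt 2 * Num.sqrt 2 = 2 :> R by rewrite -expr2 sqr_sqrtr.
have : 0 <= Num.sqrt 2 * (4 * (eps * D) - Num.sqrt 2 * S) by rewrite mulr_ge0 ?sqrtr_ge0 ?subr_ge0.
rewrite mulrBr [_ * (_ * S)]mulrA t2 !natrM; lra.
Qed.
End Optimal.
End CHSH.

Theorem proposition7p2 (R : rcfType) (n : nat) (hn : (2 <= n)%N)
  (eps : R) (heps : 0 < eps) (q : R) (hq : is_quantum_bias (CHSH R n) q)
  (N : nat) (u : chsh_row n -> 'rV[R]_N) (v : 'I_n -> 'rV[R]_N)
  (hopt : eps_optimal (CHSH R n) q eps u v) :
  n%:R - 8 * Num.sqrt 2 * n%:R * (n - 1)%:R * eps <= (\rank (rows_mx v))%:R /\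
  n%:R - 8 * Num.sqrt 2 * n%:R * (n - 1)%:R * eps <= N%:R.
Proof.
have [[_ unit_v] _] := hopt.
have rank_ge : n%:R - 8 * Num.sqrt 2 * n%:R * (n - 1)%:R * eps <= (\rank (rows_mx v))%:R.
  apply: le_trans (rank_rows_mx_unit_ge unit_v).
  by rewrite lerB // (sum_sqr_dotv_le hn hq hopt).
split=> //; apply: le_trans rank_ge _.
by rewrite ler_nat rank_leq_col.
Qed.
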